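(* Let $\mathcal{L}$ be a lattice, $L\subseteq\mathcal{L}$ finite, and $\ell\in C(L)$. Then for any $\jmath\in\mathcal{L}$, membership $\jmath\in\ell\uparrow C(L)$ can be decided in $O(|L|)$ time.
   Context: A lattice means a partially ordered set $(\mathcal{L},\sqsubseteq)$ with least element $\bot$ in which any two elements have a least upper bound $\sqcup$; $\bigsqcup S$ denotes the least upper bound of a finite set ($\bigsqcup\emptyset=\bot$). The closure set is $C(S)=\{\bigsqcup S' : S'\subseteq S\}$; the up-set is $\ell\uparrow S=\{\jmath\in\mathcal{L} : \ell\sqsubseteq\jmath \text{ and } \forall\iota\in S.\ \iota\sqsubseteq\jmath\Rightarrow\iota\sqsubseteq\ell\}$. Cost model: all lattice operations ($\sqsubseteq$, $\sqcup$) take constant time. *)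

From mathcomp Require Import all_boot all_order.
Set Implicit Arguments. Unset Strict Implicit. Unset Printing Implicit Defensive.
Import Order.Theory.
Local Open Scope order_scope.

(* A "lattice" in the paper's sense: a poset with least element and binary
   joins, i.e. MathComp's [bJoinSemilatticeType d]. *)

Section LatticeNotions.
Context {disp : Order.disp_t} {T : bJoinSemilatticeType disp}.

Definition closure_set (S : seq T) : T -> Prop :=
  fun x => exists S' : seq T, {subset S' <= S} /\ x = \join_(y <- S') y.

Definition upset (l : T) (S : T -> Prop) : T -> Prop :=
  fun j => l <= j /\ (forall i, S i -> i <= j -> i <= l).

End LatticeNotions.

(* Cost model: a tiny structured imperative language whose primitive
   instructions are lattice operations (join, bottom, comparison) and
   boolean-register operations, each costing one unit.  Programs are fixed
   syntactic objects, uniform over all lattices.                            *)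

Inductive cmd : Type :=
| Skip
| Seq (c1 c2 : cmd)
| SetBot (dst : nat)
| SetJoin (dst a b : nat)
| SetCopy (dst a : nat)
| SetLeq (bdst a b : nat)
| SetB (bdst : nat) (v : bool)
| If (b : nat) (c1 c2 : cmd)
| ForIn (dst : nat) (body : cmd).

Section Semantics.
Context {disp : Order.disp_t} {T : bJoinSemilatticeType disp}.

Record state := State { lreg : nat -> T ; breg : nat -> bool }.

Definition upd {A : Type} (f : nat -> A) (k : nat) (v : A) : nat -> A :=
  fun n => if n == k then v else f n.

(* [exec L c s] = (final state, number of elementary steps). *)
Fixpoint exec (L : seq T) (c : cmd) (s : state) : state * nat :=
  match c with
  | Skip => (s, 0)
  | Seq c1 c2 =>
      let (s1, k1) := exec L c1 s in
      let (s2, k2) := exec L c2 s1 in (s2, k1 + k2)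
  | SetBot d => (State (upd (lreg s) d \bot) (breg s), 1)
  | SetJoin d a b => (State (upd (lreg s) d (lreg s a `|` lreg s b)) (breg s), 1)
  | SetCopy d a => (State (upd (lreg s) d (lreg s a)) (breg s), 1)
  | SetLeq d a b => (State (lreg s) (upd (breg s) d (lreg s a <= lreg s b)), 1)
  | SetB d v => (State (lreg s) (upd (breg s) d v), 1)
  | If b c1 c2 =>
      let (s', k) := if breg s b then exec L c1 s else exec L c2 s in (s', k.+1)
  | ForIn d body =>
      foldl (fun (acc : state * nat) (x : T) =>
               let (s0, k0) := acc in
               let (s1, k1) := exec L body (State (upd (lreg s0) d x) (breg s0)) in
               (s1, k0 + k1.+1))
            (s, 0) L
  end.

(* Initial state on input (l, j): r[0] = l, r[1] = j, all other lattice
   registers \bot, all boolean registers false.  The answer is f[0]. *)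
Definition init_state (l j : T) : state :=
  State (fun n => if n == 0 then l else if n == 1 then j else \bot)
        (fun _ => false).

End Semantics.

(* An element i of C(L) is a join of generators x in L, so i <= j forces each
   such x <= j, and i <= l follows as soon as every generator below j is below
   l.  Hence j lies in l ↑ C(L) iff l <= j and no generator x in L satisfies
   x <= j without x <= l: one comparison for l and two per generator, in a
   single pass over L. *)
From mathcomp Require Import all_boot all_order.
From mathcomp Require Import zify.
Local Open Scope order_scope.
Import Order.Theory.

Section UpsetOfClosure.
Context {disp : Order.disp_t} {T : bJoinSemilatticeType disp}.

Lemma closure_set_mem (L : seq T) (x : T) : x \in L -> closure_set L x.
Proof.
move=> xL; exists [:: x]; rewrite big_seq1; split=> // y.
by rewrite inE => /eqP ->.
Qed.

Lemma upset_closure_setP (L : seq T) (l j : T) :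
  reflect (upset l (closure_set L) j)
          ((l <= j) && all (fun x => (x <= j) ==> (x <= l)) L).
Proof.
apply: (iffP andP) => [[lj /allP genL] | [lj upL]]; split=> //.
- move=> _ [S [sSL ->]] Sj; apply/joinsP_seq => y yS _.
  apply: (implyP (genL y (sSL y yS))).
  exact: le_trans (joins_sup_seq id yS isT) Sj.
- by apply/allP => x xL; apply/implyP; apply: upL; apply: closure_set_mem.
Qed.

End UpsetOfClosure.

(* Registers: r[0] = l, r[1] = j, r[2] = the current generator x;
   f[0] = the answer, f[1] and f[2] are scratch flags. *)
Definition generator_test : cmd :=
  Seq (SetLeq 1 2 1) (If 1 (Seq (SetLeq 2 2 0) (If 2 Skip (SetB 0 false))) Skip).

Definition upset_test : cmd := Seq (SetLeq 0 0 1) (ForIn 2 generator_test).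

Section Execution.
Context {disp : Order.disp_t} {T : bJoinSemilatticeType disp}.
Implicit Types (L : seq T) (s : @state _ T) (c : cmd).

Lemma exec_Seq L c1 c2 s :
  exec L (Seq c1 c2) s =
  ((exec L c2 (exec L c1 s).1).1, (exec L c1 s).2 + (exec L c2 (exec L c1 s).1).2)%N.
Proof. by rewrite /=; case: (exec L c1 s) => s1 k1; case: exec. Qed.

Definition for_step L (d : nat) c (acc : @state _ T * nat) (x : T) : @state _ T * nat :=
  let (s0, k0) := acc in
  let (s1, k1) := exec L c (State (upd (lreg s0) d x) (breg s0)) in
  (s1, k0 + k1.+1)%N.
Arguments for_step : simpl never.

Lemma exec_ForIn L d c s : exec L (ForIn d c) s = foldl (for_step L d c) (s, 0%N) L.
Proof. by []. Qed.

Lemma exec_generator_test L s :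
  exists b n, [/\ exec L generator_test s = (State (lreg s) b, n), (n <= 5)%N
    & b 0 = breg s 0 && ((lreg s 2 <= lreg s 1) ==> (lreg s 2 <= lreg s 0))].
Proof.
case: s => r f; rewrite /= /upd /=.
by case: (r 2 <= r 1); [case: (r 2 <= r 0)|]; do 2 eexists; split;
  rewrite /= ?andbT ?andbF.
Qed.

Lemma foldl_generator_test L (l j : T) xs s k :
  lreg s 0 = l -> lreg s 1 = j ->
  let r := foldl (for_step L 2 generator_test) (s, k) xs in
  [/\ lreg r.1 0 = l, lreg r.1 1 = j,
      breg r.1 0 = breg s 0 && all (fun x => (x <= j) ==> (x <= l)) xs
    & (r.2 <= k + 6 * size xs)%N].
Proof.
elim: xs s k => [|x xs IH] s k sl sj /=; first by rewrite andbT addn0.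
set s' := State (upd (lreg s) 2 x) (breg s).
have [b [n [run n_le5 b0]]] := exec_generator_test L s'.
have -> : for_step L 2 generator_test (s, k) x = (State (lreg s') b, k + n.+1)%N.
  by rewrite /for_step -/s' run.
move: b0; rewrite /= /upd /= sl sj => b0.
have [||-> -> -> cost] := IH (State (lreg s') b) (k + n.+1)%N.
- by rewrite /= /upd /= sl.
- by rewrite /= /upd /= sj.
split=> //; first by rewrite /= b0 andbA.
by apply: leq_trans cost _; lia.
Qed.

End Execution.

Theorem mainTheorem16 :
  exists (P : cmd) (K : nat),
    forall (disp : Order.disp_t) (T : bJoinSemilatticeType disp)
           (L : seq T) (l : T),
      uniq L -> closure_set L l ->
      forall j : T,
        let r := exec L P (init_state l j) in
        (breg r.1 0 <-> upset l (closure_set L) j) /\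
        (r.2 <= K * (size L + 1))%N.
Proof.
exists upset_test, 6 => disp T L l _ _ j.
rewrite exec_Seq exec_ForIn.
have [//|//|_ _ answer cost] :=
  foldl_generator_test L l j L (exec L (SetLeq 0 0 1) (init_state l j)).1 0.
move: answer cost; case: foldl => s k /= answer cost; split; last by lia.
by rewrite answer /upd /=; split=> /upset_closure_setP.
Qed.
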